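(* For every $s\in I(\Phi)$ there exist a Weyl chamber $C$, a special involution $\varepsilon\in I^*(\Phi)$ and pairwise strongly orthogonal roots $\beta_1,\dots,\beta_r\in\Phi^\varepsilon_\circ\cap\Phi^s_\bullet$ such that $s=\varepsilon\circ s_{\beta_1}\circ\cdots\circ s_{\beta_r}$, $C$ is an S-chamber for $s$, and $C$ is also an S-chamber for $\varepsilon$ (i.e. $\varepsilon(\Phi^+(C))=\Phi^+(C)$).
   Context: $\Phi$ is a reduced crystallographic root system spanning a real Euclidean space $V$; $s_\beta$ is the reflection in $\beta^\perp$; $I(\Phi)$ is the set of orthogonal involutions of $V$ preserving $\Phi$. For $s\in I(\Phi)$: $\Phi^s_\circ=\{\alpha:s\alpha=\alpha\}$, $\Phi^s_\bullet=\{\alpha:s\alpha=-\alpha\}$, $\Phi^s_\star=\Phi\setminus(\Phi^s_\circ\cup\Phi^s_\bullet)$. $\varepsilon\in I(\Phi)$ is special if $\Phi^\varepsilon_\bullet=\emptyset$; $I^*(\Phi)$ is the set of special involutions. Distinct roots are strongly orthogonal if they are orthogonal and neither their sum nor difference is a root. For a Weyl chamber $C$ with positive roots $\Phi^+(C)$, $C$ is an S-chamber for $s$ if $s(\Phi^+(C)\cap\Phi^s_\star)\subseteq\Phi^+(C)$. *)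

From HB Require Import structures.
From mathcomp Require Import all_boot all_order all_algebra.
From mathcomp Require Import reals.
Set Implicit Arguments. Unset Strict Implicit. Unset Printing Implicit Defensive.
Import Order.TTheory GRing.Theory Num.Theory.
Local Open Scope ring_scope.

Section RootDefs.
Variables (R : realType) (n : nat).
Notation V := 'rV[R]_n.

Definition dot (u v : V) : R := (u *m v^T) 0 0.

Definition refl (b x : V) : V := x - ((2 * dot x b) / dot b b) *: b.

Definition root_system (Phi : seq V) : Prop :=
  [/\ (0 : V) \notin Phi,
      (forall v : V, exists c : 'I_(size Phi) -> R,
          v = \sum_(i < size Phi) c i *: Phi`_i),
      (forall a b, a \in Phi -> b \in Phi -> refl a b \in Phi),
      (forall a b, a \in Phi -> b \in Phi -> (2 * dot a b) / dot a a \is a Num.int)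
    & (forall a (c : R), a \in Phi -> c *: a \in Phi -> c = 1 \/ c = -1)].

(* linear maps of V are matrices acting on row vectors on the right: x |-> x *m s *)
Definition is_inv (Phi : seq V) (s : 'M[R]_n) : Prop :=
  [/\ s *m s^T = 1%:M, s *m s = 1%:M & forall a, a \in Phi -> a *m s \in Phi].

Definition fixed_root (Phi : seq V) (s : 'M[R]_n) (a : V) : Prop :=
  a \in Phi /\ a *m s = a.
Definition neg_root (Phi : seq V) (s : 'M[R]_n) (a : V) : Prop :=
  a \in Phi /\ a *m s = - a.
Definition star_root (Phi : seq V) (s : 'M[R]_n) (a : V) : Prop :=
  [/\ a \in Phi, a *m s != a & a *m s != - a].

Definition special_inv (Phi : seq V) (e : 'M[R]_n) : Prop :=
  is_inv Phi e /\ (forall a, ~ neg_root Phi e a).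

Definition strongly_orth (Phi : seq V) : rel V := fun a b =>
  [&& a != b, dot a b == 0, a + b \notin Phi & a - b \notin Phi].

(* Weyl chambers: connected components of V minus the root hyperplanes, i.e.
   the open sign cells { x | sign (a,x) = sign (a,g) for all roots a } of a
   regular vector g. *)
Definition regular (Phi : seq V) (g : V) : Prop := forall a, a \in Phi -> dot a g != 0.

Definition weyl_chamber (Phi : seq V) (C : V -> Prop) : Prop :=
  exists g, regular Phi g /\
    (forall x, C x <-> forall a, a \in Phi -> (0 < dot a x) = (0 < dot a g) /\ dot a x != 0).

Definition pos_root (Phi : seq V) (C : V -> Prop) (a : V) : Prop :=
  a \in Phi /\ forall x, C x -> 0 < dot a x.

Definition S_chamber (Phi : seq V) (s : 'M[R]_n) (C : V -> Prop) : Prop :=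
  forall a, pos_root Phi C a -> star_root Phi s a -> pos_root Phi C (a *m s).

End RootDefs.

(* Pick a regular vector [h] and choose roots [b_1, ..., b_r] with [b_i s = - b_i]
   greedily: at each step take, among the roots [a] with [a s = - a] orthogonal
   to the roots already chosen, one maximising [(a, h)].  Maximality makes every
   later choice strongly orthogonal to it, and the process stops once every root
   of [Phi^s_bullet] is non-orthogonal to some [b_i].  If [q] is the orthogonal
   projection onto the span of the [b_i], the product of their reflections is
   [1 - 2q], which commutes with [s]; hence [eps = (1 - 2q) s] is an orthogonal
   involution preserving [Phi] and fixing every [b_i], and a root with
   [a eps = - a] would satisfy [a q = 0] and [a s = - a], which is excluded.
   Finally, a generic vector of the [+1]-eigenspace of [s], tilted slightly into
   the image of [q], is regular and fixed by [eps]; its chamber is therefore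
   [eps]-stable, and since the tilt is small it is an S-chamber for [s]. *)

From HB Require Import structures.
From mathcomp Require Import all_boot all_order all_algebra.
From mathcomp Require Import reals lra.
Import Order.TTheory GRing.Theory Num.Theory.
Set Implicit Arguments. Unset Strict Implicit.
Local Open Scope ring_scope.

Section InnerProduct.
Variables (R : realType) (n : nat).
Implicit Types (u v w : 'rV[R]_n) (M : 'M[R]_n).

Lemma dotC u v : dot u v = dot v u.
Proof. by rewrite /dot -[u *m v^T]trmxK trmx_mul trmxK mxE. Qed.

Lemma dotMl u v M : dot (u *m M) v = dot u (v *m M^T).
Proof. by rewrite /dot trmx_mul trmxK mulmxA. Qed.

Lemma dotMr u v M : dot u (v *m M) = dot (u *m M^T) v.
Proof. by rewrite dotC dotMl dotC. Qed.

Lemma dotDr u v w : dot u (v + w) = dot u v + dot u w.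
Proof. by rewrite /dot linearD /= mulmxDr mxE. Qed.

Lemma dotDl u v w : dot (v + w) u = dot v u + dot w u.
Proof. by rewrite dotC dotDr !(dotC u). Qed.

Lemma dotZr u v c : dot u (c *: v) = c * dot u v.
Proof. by rewrite /dot linearZ /= -scalemxAr mxE. Qed.

Lemma dotZl u v c : dot (c *: v) u = c * dot v u.
Proof. by rewrite dotC dotZr dotC. Qed.

Lemma dotNl u v : dot (- v) u = - dot v u.
Proof. by rewrite -scaleN1r dotZl mulN1r. Qed.

Lemma dotNr u v : dot u (- v) = - dot u v.
Proof. by rewrite dotC dotNl dotC. Qed.

Lemma dot0l u : dot 0 u = 0.
Proof. by rewrite /dot mul0mx mxE. Qed.

Lemma dot0r u : dot u 0 = 0.
Proof. by rewrite dotC dot0l. Qed.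

Lemma dotvv_eq0 v : (dot v v == 0) = (v == 0).
Proof.
apply/idP/eqP => [|->]; last by rewrite dot0l.
rewrite /dot mxE (eq_bigr (fun j => v 0 j ^+ 2)) => [|j _]; last by rewrite mxE.
move/eqP/psumr_eq0P => v0; apply/matrixP => i j; rewrite (ord1 i) mxE.
by apply/eqP; rewrite -sqrf_eq0 v0 // => k _; apply: sqr_ge0.
Qed.

Lemma refl_addr_orth u v : u != 0 -> dot u v = 0 -> refl u (u + v) = v - u.
Proof.
move=> u0 uv; have uu0 : dot u u != 0 by rewrite dotvv_eq0.
rewrite /refl dotDl (dotC v) uv addr0 mulfK // scaler_nat mulr2n.
by rewrite opprD addrA addrAC subrr add0r addrC.
Qed.

Lemma reflvv u : u != 0 -> refl u u = - u.
Proof. by move=> u0; rewrite -{2}[u]addr0 refl_addr_orth ?dot0r ?sub0r. Qed.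

End InnerProduct.

Section Perturbation.
Variable R : realType.

Lemma addr_small_sign (d e : R) :
  `|e| < `|d| -> (0 < d + e) = (0 < d) /\ d + e != 0.
Proof.
move=> ed; have /andP [eN eP] : - `|e| <= e <= `|e| by rewrite -ler_norml.
have [d0|d0] := lerP 0 d.
  rewrite (ger0_norm d0) in ed.
  have de : 0 < d + e by lra.
  have dp : 0 < d by lra.
  by rewrite de dp gt_eqF.
rewrite (ltr0_norm d0) in ed.
have de : d + e < 0 by lra.
by rewrite lt_eqF // ltNge (ltW de) ltNge (ltW d0).
Qed.

Lemma exists_small_perturbation (T : eqType) (l : seq T) (D E : T -> R) :
  (forall w, w \in l -> D w = 0 -> E w != 0) ->
  exists2 t, 0 < t & forall w, w \in l ->
    D w + t * E w != 0 /\ (D w != 0 -> (0 < D w - t * E w) = (0 < D w + t * E w)).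
Proof.
move=> DE; pose K := \sum_(w <- l) `|E w| / `|D w|.
have K0 : 0 <= K by apply: sumr_ge0 => w _; rewrite divr_ge0.
pose t := (1 + K)^-1; have t_gt0 : 0 < t by rewrite invr_gt0; lra.
have small w : w \in l -> D w != 0 -> `|t * E w| < `|D w|.
  move=> wl Dw; have Dp : 0 < `|D w| by rewrite normr_gt0.
  have : `|E w| / `|D w| <= K.
    by rewrite /K (big_rem _ wl) /= lerDl sumr_ge0 // => v _; rewrite divr_ge0.
  rewrite ler_pdivrMr // normrM ger0_norm; last exact: ltW.
  by move=> EK; rewrite mulrC ltr_pdivrMr; nra.
exists t => // w wl; have [Dw|Dw] := eqVneq (D w) 0.
  by rewrite Dw add0r mulf_neq0 ?DE // gt_eqF.
have [Dpos Dnz] := addr_small_sign (small w wl Dw).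
have := @addr_small_sign (D w) (- (t * E w)).
rewrite normrN => /(_ (small w wl Dw)) [Dneg _].
by rewrite Dnz Dpos Dneg.
Qed.
End Perturbation.

Lemma exists_off_hyperplanes (R : realType) (n : nat) (vs : seq 'rV[R]_n) :
  exists x, forall v, v \in vs -> v != 0 -> dot v x != 0.
Proof.
elim: vs => [|v vs [x IH]]; first by exists 0.
pose l := [seq w <- v :: vs | w != 0].
have [|t _ Ht] := @exists_small_perturbation _ _ l (fun w => dot w x) (fun w => dot w v).
  move=> w; rewrite mem_filter inE => /andP [w0 /orP [/eqP wv _|wvs]].
    by rewrite wv dotvv_eq0 -wv.
  by move/eqP: (IH w wvs w0).
exists (x + t *: v) => w wl w0; rewrite dotDr dotZr.
by have [] := Ht w; rewrite // mem_filter w0.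
Qed.

Lemma exists_argmax (d : Order.disp_t) (X : orderType d) (T : eqType)
    (f : T -> X) (l : seq T) :
  l != [::] -> exists2 m, m \in l & forall y, y \in l -> (f y <= f m)%O.
Proof.
elim: l => // a l IH _; have [->|/IH [m ml mmax]] := eqVneq l [::].
  by exists a => [|y]; rewrite ?mem_seq1 // => /eqP ->.
have [fam|fma] := leP (f a) (f m).
  by exists m => [|y]; rewrite inE ?ml ?orbT // => /orP [/eqP ->|/mmax].
exists a => [|y]; rewrite inE ?eqxx // => /orP [/eqP -> //|/mmax fym].
exact: le_trans fym (ltW fma).
Qed.

Lemma count_lt_subpred (T : eqType) (p q : pred T) (l : seq T) x :
  subpred p q -> x \in l -> q x -> ~~ p x -> (count p l < count q l)%N.
Proof.
move=> pq xl qx px.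
have -> : count q l = (count p l + count (predD q p) l)%N.
  rewrite -count_predUI (@eq_count _ (predI _ _) pred0) ?count_pred0 ?addn0.
    by apply: eq_count => y /=; case py: (p y); rewrite ?(pq _ py).
  by move=> y /=; case: (p y); rewrite ?andbF.
by rewrite -addn1 leq_add2l -has_count; apply/hasP; exists x; rewrite //= px.
Qed.

Section StronglyOrthogonalFamily.
Variables (R : realType) (n : nat) (Phi : seq 'rV[R]_n) (s : 'M[R]_n).
Hypotheses (Phi0 : 0 \notin Phi)
  (Phi_refl : forall a b, a \in Phi -> b \in Phi -> refl a b \in Phi).

Lemma root_neq0 a : a \in Phi -> a != 0.
Proof. by move=> aPhi; apply: contraNneq Phi0 => <-. Qed.

Lemma rootN a : a \in Phi -> - a \in Phi.
Proof. by move=> aPhi; rewrite -reflvv ?root_neq0 ?Phi_refl. Qed.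

Lemma root_addr_orth a b : a \in Phi -> dot a b = 0 ->
  (a + b \in Phi) || (a - b \in Phi) -> (a + b \in Phi) && (b - a \in Phi).
Proof.
move=> aPhi ab; have a0 := root_neq0 aPhi.
have abPhi : a + b \in Phi -> b - a \in Phi.
  by move=> abPhi; rewrite -refl_addr_orth ?Phi_refl.
case/orP => [/[dup] /abPhi -> -> //| a_bPhi].
have : - b - a \in Phi by rewrite -refl_addr_orth ?Phi_refl ?dotNr ?ab ?oppr0.
by rewrite -opprD addrC => /rootN; rewrite opprK => /[dup] /abPhi -> ->.
Qed.

Lemma foldr_refl_root bs a :
  {subset bs <= Phi} -> a \in Phi -> foldr (@refl R n) a bs \in Phi.
Proof.
move=> bsPhi aPhi; elim: bs bsPhi => //= b bs IH bsPhi.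
apply: Phi_refl; first exact/bsPhi/mem_head.
by apply: IH => c cbs; apply/bsPhi; rewrite inE cbs orbT.
Qed.

Definition neg_orth (bs : seq 'rV[R]_n) : pred 'rV[R]_n :=
  fun a => (a *m s == - a) && all (fun b => dot a b == 0) bs.

Lemma neg_orth_cons b bs a : neg_orth (b :: bs) a = (dot a b == 0) && neg_orth bs a.
Proof. by rewrite /neg_orth /= andbCA. Qed.

Lemma neg_orthD bs a b : neg_orth bs a -> neg_orth bs b -> neg_orth bs (a + b).
Proof.
move=> /andP [/eqP sa /allP ab] /andP [/eqP sb /allP bb].
rewrite /neg_orth mulmxDl sa sb opprD eqxx; apply/allP => c cbs.
by rewrite dotDl (eqP (ab c cbs)) (eqP (bb c cbs)) addr0.
Qed.

Lemma neg_orthN bs a : neg_orth bs a -> neg_orth bs (- a).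
Proof.
move=> /andP [/eqP sa /allP ab]; rewrite /neg_orth mulNmx sa eqxx.
by apply/allP => c cbs; rewrite dotNl (eqP (ab c cbs)) oppr0.
Qed.

Variable h : 'rV[R]_n.
Hypothesis h_reg : regular Phi h.

(* If [a + be] or [a - be] were a root, then [be + a] and [be - a] would both
   be roots in [neg_orth bs], and the maximality of [be] would force [(a, h) = 0]. *)
Lemma argmax_strongly_orth bs be a :
  be \in Phi -> neg_orth bs be ->
  (forall c, c \in Phi -> neg_orth bs c -> dot c h <= dot be h) ->
  a \in Phi -> neg_orth bs a -> dot a be = 0 -> strongly_orth Phi a be.
Proof.
move=> bePhi nbe bemax aPhi na abe.
rewrite /strongly_orth abe eqxx /=; apply/andP; split.
  by apply: contraNneq (root_neq0 bePhi) => a_be; rewrite -dotvv_eq0 -{1}a_be abe.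
rewrite -negb_or; apply/negP => /(root_addr_orth aPhi abe) /andP [Phip Phim].
have := bemax _ Phip (neg_orthD na nbe); rewrite dotDl.
have := bemax _ Phim (neg_orthD nbe (neg_orthN na)); rewrite dotDl dotNl.
move=> le_sub le_add; have ah0 : dot a h = 0 by lra.
by move: (h_reg aPhi); rewrite ah0 eqxx.
Qed.

Definition greedy_inv (bs : seq 'rV[R]_n) : Prop :=
  [/\ forall b, b \in bs -> neg_root Phi s b,
      pairwise (strongly_orth Phi) bs
    & forall a, a \in Phi -> neg_orth bs a -> all (strongly_orth Phi a) bs].

Lemma greedy_inv_cons bs be :
  greedy_inv bs -> be \in Phi -> neg_orth bs be ->
  (forall c, c \in Phi -> neg_orth bs c -> dot c h <= dot be h) ->
  greedy_inv (be :: bs).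
Proof.
move=> [bs_neg bs_so bs_adm] bePhi nbe bemax; split.
- move=> b; rewrite inE => /orP [/eqP -> | /bs_neg //].
  by split; move: nbe => /andP [/eqP].
- by rewrite /= bs_so bs_adm.
move=> a aPhi; rewrite neg_orth_cons => /andP [/eqP abe na] /=.
by rewrite (argmax_strongly_orth bePhi nbe) ?bs_adm.
Qed.

Lemma exists_maximal_greedy :
  exists bs, greedy_inv bs /\ ~~ has (neg_orth bs) Phi.
Proof.
suff greedy bs : greedy_inv bs ->
    exists bs', greedy_inv bs' /\ ~~ has (neg_orth bs') Phi.
  by apply: (greedy [::]); split.
have [k] := ubnP (count (neg_orth bs) Phi).
elim: k bs => // k IH bs cnt inv.
have [adm|] := boolP (has (neg_orth bs) Phi); last by exists bs.
have [|be] := exists_argmax (fun c => dot c h) (l := filter (neg_orth bs) Phi).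
  by rewrite -size_eq0 size_filter -lt0n -has_count.
rewrite mem_filter => /andP [nbe bePhi] be_argmax.
have be_max c : c \in Phi -> neg_orth bs c -> dot c h <= dot be h.
  by move=> cPhi nc; apply: be_argmax; rewrite mem_filter nc.
apply: (IH (be :: bs)); last exact: greedy_inv_cons.
rewrite -ltnS (leq_trans _ cnt) // ltnS.
apply: (count_lt_subpred _ bePhi nbe).
  by move=> c; rewrite neg_orth_cons => /andP [].
by rewrite neg_orth_cons dotvv_eq0 (negPf (root_neq0 bePhi)).
Qed.

End StronglyOrthogonalFamily.

Lemma exists_strongly_orth_cover (R : realType) (n : nat) (Phi : seq 'rV[R]_n) s :
  0 \notin Phi -> (forall a b, a \in Phi -> b \in Phi -> refl a b \in Phi) ->
  exists bs, [/\ forall b, b \in bs -> neg_root Phi s b,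
                 pairwise (strongly_orth Phi) bs
               & forall a, neg_root Phi s a -> exists2 b, b \in bs & dot a b != 0].
Proof.
move=> Phi0 Phi_refl; have [h h_off] := exists_off_hyperplanes Phi.
have h_reg : regular Phi h by move=> a aPhi; apply/h_off/(root_neq0 Phi0).
have [bs [[bs_neg bs_so _] maximal]] := exists_maximal_greedy s Phi0 Phi_refl h_reg.
exists bs; split => // a [aPhi sa]; move/hasPn: maximal => /(_ a aPhi).
by rewrite /neg_orth sa eqxx /= => /allPn.
Qed.

Section OrthogonalProjection.
Variables (R : realType) (n : nat).
Implicit Types (x b c : 'rV[R]_n) (bs : seq 'rV[R]_n).

Definition orth_proj bs : 'M[R]_n := \sum_(b <- bs) (dot b b)^-1 *: (b^T *m b).

Lemma mulmx_orth_proj x bs :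
  x *m orth_proj bs = \sum_(b <- bs) (dot x b / dot b b) *: b.
Proof.
rewrite mulmx_sumr; apply: eq_bigr => b _.
by rewrite -scalemxAr mulmxA [x *m _]mx11_scalar mul_scalar_mx scalerA mulrC.
Qed.

Lemma trmx_orth_proj bs : (orth_proj bs)^T = orth_proj bs.
Proof.
rewrite /orth_proj linear_sum; apply: eq_bigr => b _.
by rewrite linearZ /= trmx_mul trmxK.
Qed.

Lemma orth_proj_orth x bs :
  (forall b, b \in bs -> dot x b = 0) -> x *m orth_proj bs = 0.
Proof.
move=> xbs; rewrite mulmx_orth_proj big_seq big1 // => b /xbs ->.
by rewrite mul0r scale0r.
Qed.

Lemma mulmx_orth_proj_cons x c bs :
  x *m orth_proj (c :: bs) = (dot x c / dot c c) *: c + x *m orth_proj bs.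
Proof. by rewrite !mulmx_orth_proj big_cons. Qed.

Section Orthogonal.
Variable bs : seq 'rV[R]_n.
Hypotheses (bs_orth : pairwise (fun b c => dot b c == 0) bs) (bs0 : 0 \notin bs).

Lemma orth_proj_id b : b \in bs -> b *m orth_proj bs = b.
Proof.
elim: bs bs_orth bs0 => // c l IH /= /andP [/allP cl l_orth].
rewrite inE negb_or eq_sym => /andP [c0 l0]; rewrite mulmx_orth_proj_cons inE.
case/orP => [/eqP -> | bl].
  rewrite divff ?dotvv_eq0 // scale1r orth_proj_orth ?addr0 // => d dl.
  exact/eqP/cl.
by rewrite IH // dotC (eqP (cl b bl)) mul0r scale0r add0r.
Qed.

Lemma dot_orth_proj x b : b \in bs -> dot (x *m orth_proj bs) b = dot x b.
Proof. by move=> bbs; rewrite dotMl trmx_orth_proj orth_proj_id. Qed.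

Lemma orth_proj_idem : orth_proj bs *m orth_proj bs = orth_proj bs.
Proof.
rewrite {1}/orth_proj mulmx_suml big_seq [RHS]big_seq; apply: eq_bigr => b bbs.
by rewrite -scalemxAl -mulmxA orth_proj_id.
Qed.

Lemma orth_proj_mulmx_eqN (s : 'M[R]_n) :
  (forall b, b \in bs -> b *m s = - b) -> orth_proj bs *m s = - orth_proj bs.
Proof.
move=> bs_neg; rewrite /orth_proj mulmx_suml -sumrN big_seq [RHS]big_seq.
by apply: eq_bigr => b bbs; rewrite -scalemxAl -mulmxA bs_neg // mulmxN scalerN.
Qed.

Lemma mulmx_orth_proj_eqN (s : 'M[R]_n) : s^T = s ->
  (forall b, b \in bs -> b *m s = - b) -> s *m orth_proj bs = - orth_proj bs.
Proof.
move=> sT bs_neg; apply: trmx_inj.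
by rewrite trmx_mul sT trmx_orth_proj linearN /= trmx_orth_proj orth_proj_mulmx_eqN.
Qed.

End Orthogonal.

Lemma foldr_refl_orth_proj bs x :
  pairwise (fun b c => dot b c == 0) bs -> 0 \notin bs ->
  foldr (@refl R n) x bs = x *m (1%:M - orth_proj bs *+ 2).
Proof.
rewrite mulmxBr mulmx1 raddfMn /=; elim: bs => [|c l IH] /=.
  by rewrite /orth_proj big_nil mulmx0 mul0rn subr0.
move=> /andP [/allP cl l_orth]; rewrite inE negb_or eq_sym => /andP [c0 l0].
have dotc : dot (x - (x *m orth_proj l) *+ 2) c = dot x c.
  rewrite dotDl dotNl -scaler_nat dotZl dotMl trmx_orth_proj.
  by rewrite orth_proj_orth ?dot0r ?mulr0 ?subr0 // => d /cl /eqP.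
rewrite IH // /refl dotc mulmx_orth_proj_cons.
have -> : (2 * dot x c / dot c c) *: c = ((dot x c / dot c c) *: c) *+ 2.
  by rewrite scalerMnl -mulrA mulr_natl.
by rewrite -addrA -opprD mulrnDl (addrC (_ *+ 2)).
Qed.

End OrthogonalProjection.

Definition twist (A : pzRingType) (s q : A) : A := (1 - q *+ 2) * s.

Section Twist.
Variables (A : pzRingType) (s q : A).
Hypotheses (ss : s * s = 1) (sq : s * q = - q) (qs : q * s = - q) (qq : q * q = q).

Lemma mulr_reflector : q * (1 - q *+ 2) = - q.
Proof. by rewrite mulrBr mulr1 mulrnAr qq mulr2n opprD addrA subrr sub0r. Qed.

Lemma reflector_mulr : (1 - q *+ 2) * q = - q.
Proof. by rewrite mulrBl mul1r mulrnAl qq mulr2n opprD addrA subrr sub0r. Qed.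

Lemma reflector_invol : (1 - q *+ 2) * (1 - q *+ 2) = 1.
Proof. by rewrite {1}mulrBl mul1r mulrnAl mulr_reflector mulNrn opprK subrK. Qed.

Lemma reflector_comm : (1 - q *+ 2) * s = s * (1 - q *+ 2).
Proof. by rewrite mulrBl mulrBr mul1r mulr1 mulrnAl mulrnAr qs sq. Qed.

Lemma twist_invol : twist s q * twist s q = 1.
Proof.
by rewrite /twist mulrA -(mulrA _ s) -reflector_comm mulrA reflector_invol mul1r ss.
Qed.

Lemma reflector_twist : (1 - q *+ 2) * twist s q = s.
Proof. by rewrite /twist mulrA reflector_invol mul1r. Qed.

Lemma twist_mulr : twist s q * q = q.
Proof. by rewrite /twist -mulrA sq mulrN reflector_mulr opprK. Qed.

Lemma twist_mull : q * twist s q = q.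
Proof. by rewrite /twist mulrA mulr_reflector mulNr qs opprK. Qed.

Lemma addr1s_twist : (1 + s) * twist s q = 1 + s.
Proof.
have s1q : (1 + s) * q = 0 by rewrite mulrDl mul1r sq subrr.
rewrite /twist mulrA mulrBr mulr1 mulrnAr s1q mul0rn subr0.
by rewrite mulrDl mul1r ss addrC.
Qed.

End Twist.

Section InvolutionTwist.
Variables (R : realType) (n : nat) (s q : 'M[R]_n).
Hypotheses (sT : s^T = s) (ss : s *m s = 1%:M) (qT : q^T = q)
  (sq : s *m q = - q) (qs : q *m s = - q) (qq : q *m q = q).
Local Notation eps := (twist s q).

Lemma trmx_twist : eps^T = eps.
Proof.
rewrite /twist -mulmxE trmx_mul sT linearB /= trmx1 raddfMn /= qT.
by rewrite mulmxE idmxE -reflector_comm.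
Qed.

Lemma mulmx1s_eq0 (a : 'rV[R]_n) : (a *m (1%:M + s) == 0) = (a *m s == - a).
Proof. by rewrite mulmxDr mulmx1 addrC addr_eq0. Qed.

Lemma special_inv_twist (Phi : seq 'rV[R]_n) :
  (forall a, a \in Phi -> a *m s \in Phi) ->
  (forall a, a \in Phi -> a *m (1%:M - q *+ 2) \in Phi) ->
  (forall a, a \in Phi -> a *m s = - a -> a *m q != 0) ->
  special_inv Phi eps.
Proof.
move=> sPhi reflPhi Phi_q; have eps2 : eps *m eps = 1%:M := twist_invol ss sq qs qq.
split; first split; rewrite ?trmx_twist //.
  by move=> a aPhi; rewrite /twist -mulmxE mulmxA sPhi ?reflPhi.
move=> a [aPhi a_eps].
have aq0 : a *m q = 0.
  have eps_q : eps *m q = q := twist_mulr sq qq.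
  have aqN : a *m q = - (a *m q) by rewrite -{1}eps_q mulmxA a_eps mulNmx.
  have : a *m q *+ 2 = 0 by rewrite mulr2n {1}aqN addNr.
  by move/eqP; rewrite -scaler_nat scaler_eq0 pnatr_eq0 => /eqP.
have a_s : a *m s = - a.
  by rewrite -a_eps /twist -mulmxE mulmxA mulmxBr mulmx1 raddfMn /= aq0 mul0rn subr0.
by move: (Phi_q a aPhi a_s); rewrite aq0 eqxx.
Qed.

Lemma exists_twist_chamber_point (Phi : seq 'rV[R]_n) :
  (forall a, a \in Phi -> a *m s = - a -> a *m q != 0) ->
  exists g, [/\ regular Phi g, g *m eps = g
              & forall a, a \in Phi -> a *m s != - a ->
                  (0 < dot (a *m s) g) = (0 < dot a g)].
Proof.
move=> Phi_q.
have [x x_off] :=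
  exists_off_hyperplanes ([seq a *m (1%:M + s) | a <- Phi] ++ [seq a *m q | a <- Phi]).
pose D a := dot (a *m (1%:M + s)) x; pose E a := dot (a *m q) x.
have D_neq0 a : a \in Phi -> a *m s != - a -> D a != 0.
  move=> aPhi a_s; apply: x_off; last by rewrite mulmx1s_eq0.
  by rewrite mem_cat (map_f (fun b => b *m _)).
have [|t t_gt0 t_small] := @exists_small_perturbation _ _ Phi D E.
  move=> a aPhi Da0; have [a_s|/(D_neq0 a aPhi)] := eqVneq (a *m s) (- a); last first.
    by rewrite Da0 eqxx.
  apply: x_off; last exact: Phi_q.
  by rewrite mem_cat (map_f (fun b => b *m _)) ?orbT.
pose g := x *m (1%:M + s) + t *: (x *m q).
have dot_g u : dot u g = dot (u *m (1%:M + s)) x + t * dot (u *m q) x.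
  by rewrite dotDr dotZr !dotMr linearD /= trmx1 sT qT.
have s1s : s *m (1%:M + s) = 1%:M + s by rewrite mulmxDr mulmx1 ss addrC.
have dot_sg a : dot (a *m s) g = D a - t * E a.
  by rewrite dot_g -!mulmxA s1s sq mulmxN dotNl mulrN.
exists g; split.
- by move=> a aPhi; have [] := t_small a aPhi; rewrite dot_g.
- have eps_1s : (1%:M + s) *m eps = 1%:M + s := addr1s_twist ss sq.
  have q_eps : q *m eps = q := twist_mull qs qq.
  by rewrite mulmxDl -scalemxAl -!mulmxA eps_1s q_eps.
move=> a aPhi a_s; have [_] := t_small a aPhi.
by rewrite dot_sg dot_g => ->; last exact: D_neq0.
Qed.

End InvolutionTwist.

Section Chamber.
Variables (R : realType) (n : nat) (Phi : seq 'rV[R]_n) (g : 'rV[R]_n).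
Hypothesis g_reg : regular Phi g.

Definition chamber : 'rV[R]_n -> Prop :=
  fun x => forall a, a \in Phi -> (0 < dot a x) = (0 < dot a g) /\ dot a x != 0.

Lemma weyl_chamber_chamber : weyl_chamber Phi chamber.
Proof. by exists g. Qed.

Lemma pos_root_chamber a : pos_root Phi chamber a <-> a \in Phi /\ 0 < dot a g.
Proof.
split=> [[aPhi a_pos] | [aPhi ag]]; split=> //; last by move=> x /(_ a aPhi) [->].
by apply: a_pos => b bPhi; split=> //; apply: g_reg.
Qed.

Lemma pos_root_chamber_stable (M : 'M[R]_n) a :
  (forall b, b \in Phi -> b *m M \in Phi) -> g *m M^T = g ->
  pos_root Phi chamber a -> pos_root Phi chamber (a *m M).
Proof.
move=> MPhi gM /pos_root_chamber [aPhi ag]; apply/pos_root_chamber.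
by rewrite dotMl gM MPhi.
Qed.

Lemma S_chamber_chamber (s : 'M[R]_n) :
  (forall a, a \in Phi -> a *m s \in Phi) ->
  (forall a, a \in Phi -> a *m s != - a -> (0 < dot (a *m s) g) = (0 < dot a g)) ->
  S_chamber Phi s chamber.
Proof.
move=> sPhi s_sign a /pos_root_chamber [aPhi ag] [_ _ a_s].
by apply/pos_root_chamber; rewrite sPhi ?s_sign.
Qed.

End Chamber.

Section NegativeRootTwist.
Variables (R : realType) (n : nat) (Phi : seq 'rV[R]_n) (s : 'M[R]_n) (bs : seq 'rV[R]_n).
Hypotheses (Phi0 : 0 \notin Phi)
  (Phi_refl : forall a b, a \in Phi -> b \in Phi -> refl a b \in Phi)
  (sT : s^T = s) (ss : s *m s = 1%:M) (sPhi : forall a, a \in Phi -> a *m s \in Phi)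
  (bs_neg : forall b, b \in bs -> neg_root Phi s b)
  (bs_so : pairwise (strongly_orth Phi) bs)
  (bs_cover : forall a, neg_root Phi s a -> exists2 b, b \in bs & dot a b != 0).
Local Notation q := (orth_proj bs).
Local Notation eps := (twist s q).

Let bsPhi : {subset bs <= Phi}. Proof. by move=> b /bs_neg []. Qed.
Let bs_s b : b \in bs -> b *m s = - b. Proof. by case/bs_neg. Qed.
Let bs_orth : pairwise (fun b c => dot b c == 0) bs.
Proof. by apply: sub_pairwise bs_so => b c /and4P []. Qed.
Let bs0 : 0 \notin bs. Proof. by apply/negP => /bsPhi; apply/negP. Qed.
Let sq : s *m q = - q. Proof. exact: mulmx_orth_proj_eqN. Qed.
Let qs : q *m s = - q. Proof. exact: orth_proj_mulmx_eqN. Qed.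
Let qq : q *m q = q. Proof. exact: orth_proj_idem. Qed.

Let reflE x : foldr (@refl R n) x bs = x *m (1%:M - q *+ 2).
Proof. exact: foldr_refl_orth_proj. Qed.

Let epsE x : x *m eps = foldr (@refl R n) x bs *m s.
Proof. by rewrite reflE -mulmxA. Qed.

Let Phi_q a : a \in Phi -> a *m s = - a -> a *m q != 0.
Proof.
move=> aPhi a_s; have [b bbs] := bs_cover (conj aPhi a_s).
by apply: contraNneq => aq0; rewrite -(dot_orth_proj bs_orth bs0 a bbs) aq0 dot0l.
Qed.

Lemma mulmx_foldr_refl_twist x : x *m s = foldr (@refl R n) x bs *m eps.
Proof.
have P_eps : (1%:M - q *+ 2) *m eps = s := reflector_twist s qq.
by rewrite reflE -mulmxA P_eps.
Qed.

Lemma fixed_root_twist_orth_proj b : b \in bs -> fixed_root Phi eps b.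
Proof.
move=> bbs; split; first exact: bsPhi.
rewrite epsE reflE mulmxBr mulmx1 raddfMn /= (orth_proj_id bs_orth bs0 bbs).
by rewrite mulr2n opprD addrA subrr sub0r mulNmx bs_s ?opprK.
Qed.

Lemma special_inv_twist_orth_proj : special_inv Phi eps.
Proof.
apply: special_inv_twist => // [|a aPhi]; first exact: trmx_orth_proj.
by rewrite -reflE foldr_refl_root.
Qed.

Lemma exists_chamber_twist_orth_proj : exists g, [/\ regular Phi g,
  S_chamber Phi s (chamber Phi g)
  & forall a, pos_root Phi (chamber Phi g) a -> pos_root Phi (chamber Phi g) (a *m eps)].
Proof.
have [g [g_reg g_eps g_sign]] :=
  exists_twist_chamber_point sT ss (trmx_orth_proj bs) sq qs qq Phi_q.
exists g; split=> //; first exact: S_chamber_chamber.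
move=> a; apply: pos_root_chamber_stable; rewrite ?trmx_twist ?trmx_orth_proj //.
by move=> b bPhi; rewrite epsE sPhi // foldr_refl_root.
Qed.

End NegativeRootTwist.

Unset Implicit Arguments.

Theorem proposition2p34 (R : realType) (n : nat) (Phi : seq 'rV[R]_n)
    (s : 'M[R]_n) :
  root_system Phi -> is_inv Phi s ->
  exists (C : 'rV[R]_n -> Prop) (eps : 'M[R]_n) (bs : seq 'rV[R]_n),
    [/\ weyl_chamber Phi C,
        special_inv Phi eps,
        (forall b, b \in bs -> fixed_root Phi eps b /\ neg_root Phi s b)
      & pairwise (strongly_orth Phi) bs] /\
    [/\ (* s = eps o s_{b_1} o ... o s_{b_r}, maps acting on row vectors *)
        (forall x : 'rV[R]_n, x *m s = (foldr (@refl R n) x bs) *m eps),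
        S_chamber Phi s C,
        S_chamber Phi eps C
      & (forall a, pos_root Phi C a -> pos_root Phi C (a *m eps))].
Proof.
move=> [Phi0 _ Phi_refl _ _] [s_orth ss sPhi].
have sT : s^T = s by rewrite -[LHS]mul1mx -ss -mulmxA s_orth mulmx1.
have [bs [bs_neg bs_so bs_cover]] := exists_strongly_orth_cover s Phi0 Phi_refl.
have [g [g_reg s_chamber eps_pos]] :=
  exists_chamber_twist_orth_proj Phi0 Phi_refl sT ss sPhi bs_neg bs_so bs_cover.
exists (chamber Phi g), (twist s (orth_proj bs)), bs; split; split=> //.
- exact: weyl_chamber_chamber g_reg.
- exact: special_inv_twist_orth_proj.
- by move=> b bbs; split; [exact: fixed_root_twist_orth_proj | exact: bs_neg].
- by move=> x; apply: (mulmx_foldr_refl_twist Phi0).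
- by move=> a a_pos _; apply: eps_pos.
Qed.
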